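(* Let $G$ be a block graph with diameter $2$. Then $G$ is $\chi_\rho$-critical if and only if $\delta(G) \geq 2$.
   Context: Graphs are finite and simple. A block of $G$ is a maximal connected subgraph without cut vertices; a block graph is a connected graph in which every block is a complete graph. $\delta(G)$ is the minimum degree. A $k$-packing coloring of $G$ is a map $c:V(G)\to\{1,\ldots,k\}$ such that two distinct vertices $u,v$ with $c(u)=c(v)=i$ satisfy $d_G(u,v)>i$ (distance between vertices in different components is infinite); $\chi_\rho(G)$ is the smallest $k$ for which such a coloring exists. $G$ is $\chi_\rho$-critical if $\chi_\rho(H)<\chi_\rho(G)$ for every proper subgraph $H$ of $G$. *)

(* Simple graph G = (T, e) with e symmetric, irreflexive. *)
From mathcomp Require Import all_boot.
Set Implicit Arguments. Unset Strict Implicit. Unset Printing Implicit Defensive.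

Section Graphs.
Variable T : finType.

(* A (sub)graph is given by a vertex set V and a set E of ordered pairs
   (each undirected edge uv is stored as (u,v) and (v,u)). *)

Definition edges (e : rel T) : {set T * T} := [set p | e p.1 p.2].

Definition is_subgraph (e : rel T) (V : {set T}) (E : {set T * T}) : Prop :=
  (forall p, p \in E -> [/\ p.1 \in V, p.2 \in V & e p.1 p.2]) /\
  (forall u v, ((u, v) \in E) = ((v, u) \in E)).

Definition is_proper_subgraph (e : rel T) (V : {set T}) (E : {set T * T}) : Prop :=
  is_subgraph e V E /\ (V != [set: T] \/ E != edges e).

(* ball E n u: vertices reachable from u by a walk of length <= n using E;
   so  v \notin ball E i u  <->  d(u,v) > i  (infinite distance allowed). *)
Fixpoint ball (E : {set T * T}) (n : nat) (u : T) : {set T} :=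
  if n is n'.+1 then
    ball E n' u :|: [set y | [exists x in ball E n' u, (x, y) \in E]]
  else [set u].

Definition packing_coloring (V : {set T}) (E : {set T * T}) (k : nat)
    (c : {ffun T -> 'I_k.+1}) : bool :=
  [forall v in V, 0 < c v] &&
  [forall u in V, forall v in V,
     (u != v) && (c u == c v :> nat) ==> (v \notin ball E (c u) u)].

Definition packing_colorable (V : {set T}) (E : {set T * T}) (k : nat) : bool :=
  [exists c : {ffun T -> 'I_k.+1}, @packing_coloring V E k c].

Lemma packing_colorable_exists (V : {set T}) (E : {set T * T}) :
  exists k, packing_colorable V E k.
Proof.
exists #|T|; apply/existsP.
exists [ffun v => inord (enum_rank v).+1 : 'I_#|T|.+1].
apply/andP; split.
  by apply/forallP => v; apply/implyP => _; rewrite ffunE inordK // ltnS ltn_ord.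
apply/forallP => u; apply/implyP => _; apply/forallP => v; apply/implyP => _.
apply/implyP => /andP [uv]; rewrite !ffunE !inordK ?ltnS ?ltn_ord //.
by rewrite eqSS => /eqP /val_inj /enum_rank_inj Huv; rewrite Huv eqxx in uv.
Qed.

Definition chi_rho (V : {set T}) (E : {set T * T}) : nat :=
  ex_minn (packing_colorable_exists V E).

Definition chi_rho_critical (e : rel T) : Prop :=
  forall V E, is_proper_subgraph e V E -> chi_rho V E < chi_rho [set: T] (edges e).

Definition adj (E : {set T * T}) : rel T := fun x y => (x, y) \in E.

Definition sg_connected (V : {set T}) (E : {set T * T}) : Prop :=
  V != set0 /\ forall u v, u \in V -> v \in V -> connect (adj E) u v.

Definition no_cut_vertex (V : {set T}) (E : {set T * T}) : Prop :=
  forall x, x \in V -> forall u v, u \in V :\ x -> v \in V :\ x ->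
    connect (fun a b => [&& adj E a b, a != x & b != x]) u v.

Definition is_block (e : rel T) (V : {set T}) (E : {set T * T}) : Prop :=
  [/\ is_subgraph e V E, sg_connected V E, no_cut_vertex V E &
    forall V' E', is_subgraph e V' E' -> V \subset V' -> E \subset E' ->
      sg_connected V' E' -> no_cut_vertex V' E' -> V' = V /\ E' = E].

Definition is_complete (V : {set T}) (E : {set T * T}) : Prop :=
  forall u v, u \in V -> v \in V -> u != v -> (u, v) \in E.

Definition block_graph (e : rel T) : Prop :=
  sg_connected [set: T] (edges e) /\
  forall V E, is_block e V E -> is_complete V E.

Definition diameter2 (e : rel T) : Prop :=
  (forall u v, v \in ball (edges e) 2 u) /\
  exists u v, v \notin ball (edges e) 1 u.

Definition deg (e : rel T) (x : T) : nat := #|[set y | e x y]|.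

End Graphs.

From mathcomp Require Import all_boot zify.
From Stdlib Require Import ClassicalEpsilon.
Set Implicit Arguments. Unset Strict Implicit. Unset Printing Implicit Defensive.

(* In a graph of diameter 2 a packing colouring may use colour 1 on an
   independent set and every other colour only once, so chi_rho = n - alpha + 1.
   A block graph of diameter 2 has a vertex c lying in all blocks: a path between
   two nonadjacent vertices avoiding their common neighbour c would close a
   cycle, and the cycles of a block graph span cliques.
   If x has degree at most 1, its only neighbour is c; the colour-1 class of
   G - x lies in {c} or extends by x to an independent set of G, so
   chi_rho(G - x) >= chi_rho(G) and G is not critical.
   If all degrees are at least 2, every proper subgraph H has
   chi_rho(H) <= n - alpha: trading the vertex of a maximum independent set in a
   block for another vertex of that block gives maximum independent sets avoiding
   a deleted vertex, or containing both ends of a deleted edge off c; after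
   deleting an edge cv, a vertex x of another block is at distance > 2 from v,
   so v and x can share colour 2. *)

Section Packing.
Variable T : finType.
Implicit Types (E : {set T * T}) (V S : {set T}) (f : T -> nat).

Lemma ball1P E u v : reflect (v = u \/ (u, v) \in E) (v \in ball E 1 u).
Proof.
rewrite /= !inE; apply: (iffP orP) => [[/eqP->|/existsP[x /andP[]]]|[->|uv]].
- by left.
- by rewrite inE => /eqP ->; right.
- by left.
- by right; apply/existsP; exists u; rewrite inE eqxx.
Qed.

Lemma ball2P E u v : reflect
  (v = u \/ (u, v) \in E \/ exists y, (u, y) \in E /\ (y, v) \in E)
  (v \in ball E 2 u).
Proof.
rewrite [ball E 2 u]/= inE; apply: (iffP orP).
- case=> [/ball1P[->|uv]|]; [by left|by right; left|].
  rewrite inE => /existsP[x /andP[/ball1P[->|ux] xv]]; first by right; left.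
  by right; right; exists x.
- case=> [->|[uv|[y [uy yv]]]]; [by left; apply/ball1P; left|by left; apply/ball1P; right|].
  by right; rewrite inE; apply/existsP; exists y; rewrite yv andbT; apply/ball1P; right.
Qed.

Lemma ball_mono E u n m : n <= m -> ball E n u \subset ball E m u.
Proof.
elim: m => [|m IH]; first by rewrite leqn0 => /eqP ->.
rewrite leq_eqVlt => /orP[/eqP->//|]; rewrite ltnS => /IH nm.
exact: subset_trans nm (subsetUl _ _).
Qed.

Definition packing_set E i S :=
  {in S &, forall y z, y != z -> z \notin ball E i y}.

Definition packing_fun V E k f :=
  {in V, forall v, 0 < f v <= k} /\
  {in V &, forall u v, u != v -> f u = f v -> v \notin ball E (f u) u}.

Lemma chi_rho_le_packing V E k f : packing_fun V E k f -> chi_rho V E <= k.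
Proof.
move=> [fk fP]; rewrite /chi_rho; case: ex_minnP => m _; apply.
have fK v : v \in V -> (inord (f v) : 'I_k.+1) = f v :> nat.
  by move=> vV; rewrite inordK // ltnS; case/andP: (fk v vV).
apply/existsP; exists [ffun v => inord (f v) : 'I_k.+1]; apply/andP; split.
  by apply/forallP => v; apply/implyP => vV; rewrite ffunE fK //; case/andP: (fk v vV).
apply/forallP => u; apply/implyP => uV; apply/forallP => v; apply/implyP => vV.
apply/implyP => /andP[uv]; rewrite !ffunE !fK // => /eqP fuv.
exact: fP.
Qed.

Lemma chi_rho_packing V E : exists f, packing_fun V E (chi_rho V E) f.
Proof.
rewrite /chi_rho; case: ex_minnP => k /existsP[col /andP[/forallP col0 /forallP colP]] _.
exists (fun v => nat_of_ord (col v)); split=> [v vV|u v uV vV uv cuv].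
  by rewrite -[_ <= k]ltnS ltn_ord andbT; apply: (implyP (col0 v)) vV.
move/implyP: (colP u) => /(_ uV) /forallP /(_ v) /implyP /(_ vV) /implyP; apply.
by rewrite uv cuv eqxx.
Qed.

(* Vertices of R receive pairwise distinct fresh colours above m. *)
Lemma chi_rho_le_fresh V E R m f :
  packing_fun (V :\: R) E m f -> chi_rho V E <= m + #|R|.
Proof.
move=> [fm fP]; pose g v := if v \in R then m + (index v (enum R)).+1 else f v.
have idxR v : v \in R -> index v (enum R) < #|R| by rewrite cardE index_mem mem_enum.
have fmR v : v \in V -> v \notin R -> 0 < f v <= m by move=> vV vR; apply: fm; rewrite inE vR.
apply: (chi_rho_le_packing (f := g)); split=> [v vV|u v uV vV uv].
  rewrite /g; case: ifPn => vR; first by have := idxR v vR; lia.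
  by have := fmR v vV vR; lia.
rewrite /g; case: ifPn => uR; case: ifPn => vR.
- move=> /addnI [] idx; have : nth u (enum R) (index u (enum R)) = v.
    by rewrite idx nth_index ?mem_enum.
  by rewrite nth_index ?mem_enum // => /eqP; rewrite (negbTE uv).
- by have := fmR v vV vR; lia.
- by have := fmR u uV uR; lia.
- by apply: fP => //; rewrite inE ?uR ?vR.
Qed.

Lemma chi_rho_le_packing1 V E S : packing_set E 1 S -> chi_rho V E <= 1 + #|V :\: S|.
Proof.
move=> P1; apply: (chi_rho_le_fresh (f := fun=> 1)); rewrite setDDr setDv set0U.
by split=> // u v /setIP[_ uS] /setIP[_ vS] uv _; apply: P1.
Qed.

Lemma chi_rho_le_packing12 V E S1 S2 : packing_set E 1 S1 -> packing_set E 2 S2 ->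
  chi_rho V E <= 2 + #|V :\: (S1 :|: S2)|.
Proof.
move=> P1 P2; apply: (chi_rho_le_fresh (f := fun v => if v \in S1 then 1 else 2)).
rewrite setDDr setDv set0U; split=> [v _|u v /setIP[_ uS] /setIP[_ vS] uv]; first by case: ifP.
move: uS vS; rewrite !inE; case: (boolP (u \in S1)); case: (boolP (v \in S1)) => //= vS1 uS1.
- by move=> _ _ _; apply: P1.
- by move=> uS2 vS2 _; apply: P2.
Qed.

Lemma packing2_pair E v x : symmetric (adj E) -> v != x -> x \notin ball E 2 v ->
  packing_set E 2 [set v; x].
Proof.
move=> Esym vx xv y z /set2P[]-> /set2P[]-> //; rewrite ?eqxx // => _.
apply: contra xv => /ball2P vx'; apply/ball2P; rewrite /adj in Esym.
case: vx' => [->|[xvE|[t [xt tv]]]]; [by left | by right; left; rewrite Esym |].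
by right; right; exists t; split; rewrite Esym.
Qed.

(* In diameter at most 2 every colour other than 1 is used at most once. *)
Lemma chi_rho_diameter2_lower V E : V != set0 -> {in V &, forall u v, v \in ball E 2 u} ->
  exists2 C : {set T}, C \subset V & packing_set E 1 C /\ #|V| < chi_rho V E + #|C|.
Proof.
move=> /set0Pn[v0 v0V] diam; have [f [fk fP]] := chi_rho_packing V E.
set k := chi_rho V E in fk fP *; pose C := [set v in V | f v == 1].
have CV : C \subset V by apply/subsetP => v; rewrite inE => /andP[].
exists C => //; split=> [y z|].
  rewrite [y \in C]inE [z \in C]inE => /andP[yV /eqP y1] /andP[zV /eqP z1] yz.
  by have := fP y z yV zV yz; rewrite y1 z1; apply.
have f2 v : v \in V :\: C -> 2 <= f v <= k.
  by rewrite !inE => /andP[/nandP[/negP//|f1] vV]; have := fk v vV; move: f1; lia.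
have f_inj : {in V :\: C &, injective f}.
  move=> u v uVC vVC fuv; apply/eqP; apply: contraT => uv.
  have /andP[u2 _] := f2 u uVC; have [[uV _] [vV _]] := (setDP uVC, setDP vVC).
  by have /negP[] := fP u v uV vV uv fuv; apply: subsetP (ball_mono E u u2) _ (diam u v uV vV).
have : #|V :\: C| <= k.-1.
  rewrite cardE -(size_map f) -(size_iota 2 k.-1); apply: uniq_leq_size.
    by rewrite map_inj_in_uniq ?enum_uniq // => u v; rewrite !mem_enum; apply: f_inj.
  move=> x /mapP[v]; rewrite mem_enum => /f2 + ->; rewrite mem_iota; lia.
have := cardsID C V; rewrite (setIidPr CV); have := fk v0 v0V; lia.
Qed.

End Packing.

Section Stable.
Variable T : finType.
Implicit Types (r : rel T) (A B S K : {set T}).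

Definition stable r S := [forall y in S, forall z in S, (y != z) ==> ~~ r y z].

Definition clique r K := {in K &, forall y z, y != z -> r y z}.

Definition alpha r := \max_(S : {set T} | stable r S) #|S|.

Lemma stableP r S : reflect {in S &, forall y z, y != z -> ~~ r y z} (stable r S).
Proof.
apply: (iffP forallP) => [st y z yS zS|st y].
  by move/implyP: (st y) => /(_ yS) /forallP /(_ z) /implyP /(_ zS) /implyP.
by apply/implyP => yS; apply/forallP => z; apply/implyP => zS; apply/implyP; apply: st.
Qed.

Lemma stable_sub r r' S : subrel r' r -> stable r S -> stable r' S.
Proof.
move=> r'r /stableP st; apply/stableP => y z yS zS /(st y z yS zS).
by apply: contra; apply: r'r.
Qed.

Lemma stable_subset r A B : A \subset B -> stable r B -> stable r A.
Proof. by move=> /subsetP AB /stableP st; apply/stableP => y z /AB yB /AB; apply: st. Qed.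

Lemma stable_setU1 r x S : symmetric r -> stable r S -> {in S, forall y, ~~ r x y} ->
  stable r (x |: S).
Proof.
move=> rsym /stableP st xS; apply/stableP => y z /setU1P[->|yS] /setU1P[->|zS];
  rewrite ?eqxx // => yz; [exact: xS | by rewrite rsym; apply: xS | exact: st].
Qed.

Lemma stable_clique_card r S K : stable r S -> clique r K -> #|S :&: K| <= 1.
Proof.
move=> /stableP st cl; apply/card_le1P => y; rewrite inE => /andP[yS yK] z.
rewrite !inE; apply/idP/eqP => [/andP[zS zK]|->]; last by rewrite yS yK.
by apply/eqP/negPn/negP => zy; have := st z y zS yS zy; rewrite cl.
Qed.

Lemma stable_le_alpha r S : stable r S -> #|S| <= alpha r.
Proof. exact: leq_bigmax_cond. Qed.

Lemma alpha_witness r : exists2 I, stable r I & #|I| = alpha r.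
Proof.
have st0 : stable r set0 by apply/stableP => y z; rewrite inE.
have [|I stI maxI] := eq_bigmax_cond (fun S => #|S|) (A := stable r).
  by apply/card_gt0P; exists set0.
by exists I => //; rewrite /alpha maxI.
Qed.

Lemma alpha_le_card r : alpha r <= #|T|.
Proof. by have [I _ <-] := alpha_witness r; apply: max_card. Qed.

Lemma packing1_stable E S : packing_set E 1 S <-> stable (adj E) S.
Proof.
split=> [P1|/stableP st y z yS zS yz]; last first.
  by apply/ball1P => -[zy|]; [move: yz; rewrite zy eqxx | apply/negP/st].
apply/stableP => y z yS zS yz; apply/negP => yzE.
by have /ball1P := P1 y z yS zS yz; apply; right.
Qed.

Lemma subgraph_packing1 (e : rel T) V E S : is_subgraph e V E -> stable e S ->
  packing_set E 1 S.
Proof. by move=> [subE _] st; apply/packing1_stable; apply: stable_sub st => u v /subE[]. Qed.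

End Stable.

Section Diameter2.
Variables (T : finType) (e : rel T).
Hypothesis hdiam : diameter2 e.

Lemma diameter2_nonadjacent : exists a b, a != b /\ ~~ e a b.
Proof.
have [a [b /ball1P nab]] := hdiam.2; exists a, b; split.
  by apply/eqP => ab; apply: nab; left.
by apply/negP => eab; apply: nab; right; rewrite inE.
Qed.

Lemma packing1_edges S : packing_set (edges e) 1 S <-> stable e S.
Proof.
have adj_edges : adj (edges e) =2 e by move=> u v; rewrite /adj inE.
rewrite packing1_stable; split; apply: stable_sub => u v; by rewrite adj_edges.
Qed.

Lemma chi_rho_diameter2 : chi_rho [set: T] (edges e) = #|T|.+1 - alpha e.
Proof.
have [a _] := diameter2_nonadjacent; have [I stI cardI] := alpha_witness e.
have ub := chi_rho_le_packing1 [set: T] ((packing1_edges I).2 stI).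
have [|u v _ _|C _ [C1 lb]] := chi_rho_diameter2_lower (V := [set: T]) (E := edges e).
- by apply/set0Pn; exists a.
- exact: hdiam.1.
have := stable_le_alpha ((packing1_edges C).1 C1); have := alpha_le_card e.
have := cardsC I; rewrite setTD cardsT in ub lb *; lia.
Qed.

End Diameter2.

Section Blocks.
Variables (T : finType) (e : rel T).
Implicit Types (V : {set T}) (E : {set T * T}).

Definition biconnected V E := [/\ is_subgraph e V E, sg_connected V E & no_cut_vertex V E].

Lemma biconnected_in_block V E : biconnected V E ->
  exists V' E', [/\ is_block e V' E', V \subset V' & E \subset E'].
Proof.
move=> bVE; pose P (X : {set T} * {set T * T}) :=
  [/\ biconnected X.1 X.2, V \subset X.1 & E \subset X.2].
pose Pb X : bool := excluded_middle_informative (P X).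
have PbVE : Pb (V, E) by apply/sumboolP.
case: (arg_maxnP (fun X : {set T} * {set T * T} => #|X.1| + #|X.2|) PbVE).
move=> -[V' E'] /sumboolP[[sub conn ncv] VV' EE'] maxX.
exists V', E'; split=> //; split=> // V'' E'' sub'' V'V'' E'E'' conn'' ncv''.
have /maxX /= le'' : Pb (V'', E'').
  by apply/sumboolP; split; [by [] | exact: subset_trans V'V'' | exact: subset_trans E'E''].
have [le1 le2] := (subset_leq_card V'V'', subset_leq_card E'E'').
split; apply/eqP; rewrite eq_sym eqEcard ?V'V'' ?E'E'' /=.
  by rewrite -(leq_add2r #|E''|) (leq_trans le'') ?leq_add2l.
by rewrite -(leq_add2l #|V''|) (leq_trans le'') ?leq_add2r.
Qed.

Lemma path_connect_sym (r : rel T) x p : symmetric r -> path r x p ->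
  {in x :: p &, forall u v, connect r u v}.
Proof.
move=> rsym rp u v up vp; apply: (connect_trans (y := x)); last exact: path_connect rp _ vp.
by rewrite (sym_connect_sym rsym); apply: path_connect rp _ up.
Qed.

Lemma cycle_cons_path x p : cycle e (x :: p) -> path e x p.
Proof. by rewrite /= rcons_path => /andP[]. Qed.

Section BlockGraph.
Hypothesis esym : symmetric e.

Lemma cycle_biconnected s : uniq s -> cycle e s -> s != [::] ->
  biconnected [set x in s] [set p | [&& e p.1 p.2, p.1 \in s & p.2 \in s]].
Proof.
move=> us cs s0; set E := [set p : T * T | _].
have adjE a b : adj E a b = [&& e a b, a \in s & b \in s] by rewrite /adj inE.
have Esym : symmetric (adj E).
  by move=> a b; rewrite !adjE esym; case: (a \in s); case: (b \in s); rewrite ?andbF.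
split; first by split=> [p|]; [rewrite !inE => /and3P[-> -> ->] | exact: Esym].
- have [x0 [s' def_s]] : exists x0 s', s = x0 :: s' by case: (s) s0 => // x0 s' _; exists x0, s'.
  split; first by apply/set0Pn; exists x0; rewrite inE def_s mem_head.
  move=> u v; rewrite !inE def_s; apply: path_connect_sym => //.
  apply: (sub_in_path (P := mem s) (e := e)); rewrite -?def_s.
  + by move=> a b sa sb eab; rewrite adjE eab sa sb.
  + exact/allP.
  + by apply: cycle_cons_path; rewrite -def_s.
- move=> z; rewrite inE => zs u v; rewrite !inE => /andP[uz su] /andP[vz sv].
  have [i s' rot_s] := rot_to zs.
  have mem_s a : a \in s = (a \in z :: s') by rewrite -rot_s mem_rot.
  move: su sv; rewrite !mem_s !inE (negbTE uz) (negbTE vz) /=.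
  case: s' rot_s mem_s => // y0 s' rot_s mem_s su sv.
  have /andP[zs' _] : uniq (z :: y0 :: s') by rewrite -rot_s rot_uniq.
  have /cycle_cons_path /andP[_ ps] : cycle e (z :: y0 :: s') by rewrite -rot_s rot_cycle.
  apply: path_connect_sym su sv; first by move=> a b; rewrite Esym (andbC (a != z)).
  apply: (sub_in_path (P := [pred a | (a \in s) && (a != z)]) (e := e)) ps.
    by move=> a b /andP[sa az] /andP[sb bz] eab; rewrite adjE eab sa sb az bz.
  apply/allP => a ha; rewrite /= mem_s inE ha orbT.
  by apply: contraNneq zs' => <-.
Qed.

Hypothesis eirr : irreflexive e.
Hypothesis hblock : block_graph e.

Lemma adj_neq x y : e x y -> x != y.
Proof. by apply: contraTneq => ->; rewrite eirr. Qed.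

Lemma cycle_clique s : uniq s -> cycle e s -> {in s &, forall x y, x != y -> e x y}.
Proof.
move=> us cs x y xs ys xy; have s0 : s != [::] by case: (s) xs.
have [V [E [blk sV _]]] := biconnected_in_block (cycle_biconnected us cs s0).
have [[subE _] _ _ _] := blk.
have /subE[_ _ //] : (x, y) \in E.
by apply: (hblock.2 V E blk) xy; apply: (subsetP sV); rewrite inE.
Qed.

Definition avoid (c : T) : rel T := [rel u v | [&& e u v, u != c & v != c]].

Lemma avoid_sym c : symmetric (avoid c).
Proof. by move=> u v; rewrite /avoid /= esym (andbC (u != c)). Qed.

Lemma path_avoid c x p : path (avoid c) x p -> c \notin p.
Proof. by elim: p x => //= y p IH x /andP[/and3P[_ _ yc] /IH]; rewrite inE negb_or eq_sym yc. Qed.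

(* A path from a to b avoiding c would close a cycle through c, hence a clique. *)
Lemma common_neighbour_separates a b c : a != b -> ~~ e a b -> e a c -> e c b ->
  ~~ connect (avoid c) a b.
Proof.
move=> ab nab ac cb; apply/negP => /connectP[p pc b_last].
move: ab nab cb; rewrite {}b_last; case: (shortenP pc) => {}p {}pc up _ ab nab cb.
have ac' := adj_neq ac.
have cyc : cycle e (c :: a :: p).
  rewrite /= (esym c a) ac rcons_path (esym _ c) cb andbT.
  by apply: sub_path pc => u v /and3P[].
have ucyc : uniq (c :: a :: p) by rewrite /= inE negb_or eq_sym ac' (path_avoid pc).
have la : last a p \in c :: a :: p by rewrite inE mem_last orbT.
have ha : a \in c :: a :: p by rewrite !inE eqxx orbT.
by move: nab; rewrite (cycle_clique ucyc cyc ha la ab).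
Qed.

Hypothesis hdiam : diameter2 e.

Lemma diameter2_avoid_connect c u v : u != c -> v != c -> ~~ e c v -> connect (avoid c) u v.
Proof.
move=> uc vc ncv; have := hdiam.1 u v; case/ball2P=> [->|[|[y []]]] //; rewrite !inE /=.
  by move=> uv; apply: connect1; rewrite /avoid /= uv uc vc.
move=> uy yv; have yc : y != c by apply: contraNneq ncv => <-.
by apply: (connect_trans (y := y)); apply: connect1; rewrite /avoid /= ?uy ?yv ?uc ?yc ?vc.
Qed.

(* Every block contains c, i.e. G - c is a disjoint union of cliques. *)
Lemma block_diameter2_centre : exists c, (forall x, x != c -> e c x) /\
  (forall x y z, y != c -> e x y -> e y z -> x != z -> e x z).
Proof.
have [a [b [ab nab]]] := diameter2_nonadjacent hdiam.
have [c [ac cb]] : exists c, e a c /\ e c b.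
  case/ball2P: (hdiam.1 a b) => [ba|[|[c []]]]; rewrite ?inE.
  - by move: ab; rewrite ba eqxx.
  - by move=> eab; move: nab; rewrite eab.
  - by exists c.
have univ x : x != c -> e c x.
  move=> xc; apply/negPn/negP => ncx.
  have /negP[] := common_neighbour_separates ab nab ac cb.
  apply: (connect_trans (y := x)); first exact: diameter2_avoid_connect (adj_neq ac) xc ncx.
  rewrite (sym_connect_sym (@avoid_sym c)).
  by apply: diameter2_avoid_connect ncx; rewrite // eq_sym adj_neq.
exists c; split=> // x y z yc xy yz xz; apply/negPn/negP => nxz.
have [xc|xc] := eqVneq x c; first by move: nxz; rewrite xc univ // -xc eq_sym.
have [zc|zc] := eqVneq z c; first by move: nxz; rewrite zc esym univ.
have xc' : e x c by rewrite esym univ.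
have /negP[] := common_neighbour_separates xz nxz xc' (univ z zc).
by apply: (connect_trans (y := y)); apply: connect1; rewrite /avoid /= ?xy ?yz ?xc ?yc ?zc.
Qed.

End BlockGraph.

End Blocks.

Section Centre.
Variables (T : finType) (e : rel T) (c : T).
Implicit Types (S C V : {set T}) (E : {set T * T}).
Hypotheses (esym : symmetric e) (eirr : irreflexive e) (hdiam : diameter2 e).
Hypothesis centre_adj : forall x, x != c -> e c x.
Hypothesis adj_trans : forall x y z, y != c -> e x y -> e y z -> x != z -> e x z.

Definition nbhd u := [set y | (y == u) || e u y].

Lemma nbhd_closed u z y : z != c -> z \in nbhd u -> e z y -> y \in nbhd u.
Proof.
move=> zc; rewrite !inE => /predU1P[->|uz] zy; first by rewrite zy orbT.
by have [//|yu] := eqVneq y u; rewrite (adj_trans zc uz zy) ?orbT // eq_sym.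
Qed.

Lemma nbhd_clique u : u != c -> clique e (nbhd u).
Proof.
move=> uc y z; rewrite !inE => /predU1P[->|uy] /predU1P[->|uz] yz //; first by rewrite eqxx in yz.
- by rewrite esym.
- by apply: adj_trans uc _ uz yz; rewrite esym.
Qed.

Definition swap_in S u := u |: (S :\: nbhd u).

Lemma stable_swap_in S u : stable e S -> stable e (swap_in S u).
Proof.
move=> st; apply: stable_setU1 => //; first exact: stable_subset (subsetDl _ _) st.
by move=> y; rewrite !inE negb_or => /andP[/andP[_ ->]].
Qed.

Lemma card_swap_in S u : u != c -> stable e S -> #|S| <= #|swap_in S u|.
Proof.
move=> uc st; rewrite cardsU1 !inE eqxx /= add1n.
by have := cardsID (nbhd u) S; have := stable_clique_card st (nbhd_clique uc); lia.
Qed.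

Lemma notin_swap_in S u y : e u y -> y \notin swap_in S u.
Proof. by move=> uy; rewrite !inE uy orbT /= orbF; apply: contraTneq uy => ->; rewrite eirr. Qed.

Definition edges_off x : {set T * T} := [set p in edges e | (p.1 != x) && (p.2 != x)].

Lemma edges_off_proper x : is_proper_subgraph e [set~ x] (edges_off x).
Proof.
split; [split|left].
- by move=> p; rewrite !inE => /andP[-> /andP[-> ->]].
- by move=> u v; rewrite !inE /= esym [(u != x) && _]andbC.
- by apply/eqP => /setP/(_ x); rewrite !inE eqxx.
Qed.

Lemma edges_off_diameter2 x : x != c ->
  {in [set~ x] &, forall u v, v \in ball (edges_off x) 2 u}.
Proof.
move=> xc; have cE y : y != x -> y != c -> (c, y) \in edges_off x /\ (y, c) \in edges_off x.
  by move=> yx yc; rewrite !inE /= (esym y c) centre_adj // yx [c == x]eq_sym xc.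
move=> u v; rewrite !in_setC1 => ux vx; apply/ball2P.
have [->|vu] := eqVneq v u; first by left.
have [uc|uc] := eqVneq u c; first by right; left; rewrite uc; apply: (cE v vx _).1; rewrite -uc.
have [vc|vc] := eqVneq v c; first by right; left; rewrite vc; apply: (cE u ux uc).2.
by right; right; exists c; split; [apply: (cE u ux uc).2 | apply: (cE v vx vc).1].
Qed.

Lemma packing1_edges_off x C : C \subset [set~ x] -> packing_set (edges_off x) 1 C ->
  stable e C.
Proof.
move=> /subsetP Cx /packing1_stable/stableP st; apply/stableP => y z yC zC yz.
have := st y z yC zC yz; have := (Cx y yC, Cx z zC).
by rewrite /adj !inE /= => -[-> ->]; rewrite !andbT.
Qed.

Lemma pendant_stable_lt_alpha x C : (forall y, e x y -> y = c) -> x \notin C ->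
  stable e C -> #|C| < alpha e.
Proof.
move=> pend xC stC; have [cC|cC] := boolP (c \in C); last first.
  have stxC : stable e (x |: C).
    by apply: stable_setU1 => // y yC; apply: contraNN cC => /pend <-.
  by have := stable_le_alpha stxC; rewrite cardsU1 xC.
have : C \subset [set c].
  apply/subsetP => y yC; rewrite inE; apply: contraT => yc.
  by move/stableP: stC => /(_ c y cC yC); rewrite eq_sym yc centre_adj // => /(_ isT).
move/subset_leq_card; rewrite cards1.
have [a [b [ab nab]]] := diameter2_nonadjacent hdiam.
have stab : stable e [set a; b].
  apply: stable_setU1 => //; last by move=> y /set1P->.
  by apply/stableP => y z /set1P-> /set1P->; rewrite eqxx.
by have := stable_le_alpha stab; rewrite cards2 ab; lia.
Qed.

Lemma chi_rho_pendant_deleted x : x != c -> (forall y, e x y -> y = c) ->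
  chi_rho [set: T] (edges e) <= chi_rho [set~ x] (edges_off x).
Proof.
move=> xc pend.
have [|C CV [C1 lb]] := chi_rho_diameter2_lower _ (edges_off_diameter2 xc).
  by apply/set0Pn; exists c; rewrite in_setC1 eq_sym.
have xC : x \notin C by apply/negP => /(subsetP CV); rewrite in_setC1 eqxx.
have := pendant_stable_lt_alpha pend xC (packing1_edges_off CV C1).
rewrite chi_rho_diameter2 // cardsC1 in lb *; have := alpha_le_card e; lia.
Qed.

Lemma critical_min_degree : chi_rho_critical e -> forall x, 1 < deg e x.
Proof.
move=> crit x; rewrite ltnNge; apply/negP => degx.
have xc : x != c.
  apply: contraTneq degx => ->; rewrite -ltnNge.
  have [a [b [ab nab]]] := diameter2_nonadjacent hdiam.
  have ac : a != c by apply: contraNneq nab => ac; rewrite ac centre_adj // -ac eq_sym.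
  have bc : b != c by apply: contraNneq nab => bc; rewrite bc esym centre_adj // -bc.
  by apply/card_gt1P; exists a, b; rewrite !inE ab (centre_adj ac) (centre_adj bc).
have pend y : e x y -> y = c.
  move/card_le1P: degx => /(_ c).
  by rewrite !inE esym centre_adj // => /(_ isT y); rewrite inE => -> /eqP.
have := crit _ _ (edges_off_proper x); rewrite ltnNge.
by rewrite chi_rho_pendant_deleted.
Qed.

Section MinDegree.
Hypothesis hdeg : forall x, 1 < deg e x.

Lemma nbr_off_centre x : exists2 w, e x w & w != c.
Proof.
have /card_gt1P[w1 [w2 [xw1 xw2 w12]]] := hdeg x; rewrite !inE in xw1 xw2.
by have [w1c|] := eqVneq w1 c; [exists w2; rewrite // -w1c eq_sym | exists w1].
Qed.

Lemma stable_avoiding1 v : exists2 S, stable e S & v \notin S /\ alpha e <= #|S|.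
Proof.
have [w vw wc] := nbr_off_centre v; have [I stI <-] := alpha_witness e.
exists (swap_in I w); first exact: stable_swap_in.
by split; [rewrite notin_swap_in // esym | exact: card_swap_in].
Qed.

Lemma stable_avoiding2 v x : ~~ e v x ->
  exists2 S, stable e S & [/\ v \notin S, x \notin S & alpha e <= #|S|].
Proof.
move=> nvx; have [w vw wc] := nbr_off_centre v; have [w' xw' w'c] := nbr_off_centre x.
have [I stI <-] := alpha_witness e; have stI' := stable_swap_in w stI.
exists (swap_in (swap_in I w) w'); first exact: stable_swap_in.
split; last by apply: leq_trans (card_swap_in wc stI) (card_swap_in w'c stI').
- have vS : v \notin swap_in I w by rewrite notin_swap_in // esym.
  rewrite !in_setU1 !in_setD negb_or negb_and vS orbT andbT.
  by apply: contraNneq nvx => ->; rewrite esym.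
- by rewrite notin_swap_in // esym.
Qed.

Lemma chi_rho_vertex_deleted V E : is_subgraph e V E -> V != [set: T] ->
  chi_rho V E <= #|T| - alpha e.
Proof.
move=> sub; rewrite eqEsubset subsetT /= => /subsetPn[v _ vV].
have [S stS [vS aS]] := stable_avoiding1 v.
have := chi_rho_le_packing1 V (subgraph_packing1 sub stS).
have : V :\: S \subset ~: (v |: S).
  apply/subsetP => y; rewrite !inE negb_or => /andP[-> yV].
  by rewrite andbT; apply: contraNneq vV => <-.
move/subset_leq_card; have := cardsC (v |: S); rewrite cardsU1 vS /=; lia.
Qed.

Lemma chi_rho_edge_deleted E u v : is_subgraph e [set: T] E -> e u v -> (u, v) \notin E ->
  u != c -> v != c -> chi_rho [set: T] E <= #|T| - alpha e.
Proof.
move=> sub uv uvE uc vc; have [I stI cardI] := alpha_witness e.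
have vS : v \notin swap_in I u := notin_swap_in I uv.
have stS : stable (adj E) (v |: swap_in I u).
  apply: stable_setU1; first exact: sub.2.
    by apply: stable_sub (stable_swap_in u stI) => y z /sub.1[].
  move=> y /setU1P[->|]; first by rewrite /adj -sub.2.
  rewrite inE => /andP[yu _]; apply: contra yu => /sub.1[_ _].
  by apply: nbhd_closed; rewrite // inE uv orbT.
have := chi_rho_le_packing1 [set: T] ((packing1_stable _ _).2 stS).
rewrite setTD; have := cardsC (v |: swap_in I u); rewrite cardsU1 vS.
by have := card_swap_in uc stI; lia.
Qed.

Lemma chi_rho_centre_edge_deleted E v : is_subgraph e [set: T] E -> v != c -> (c, v) \notin E ->
  chi_rho [set: T] E <= #|T| - alpha e.
Proof.
move=> sub vc cvE; have [a [b [ab nab]]] := diameter2_nonadjacent hdiam.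
have [x xv] : exists x, x \notin nbhd v.
  apply/existsP; apply: contraNT nab; rewrite negb_exists => /forallP/= abv.
  by apply: (nbhd_clique vc); rewrite // -[_ \in _]negbK abv.
have nvx : ~~ e v x by apply: contra xv; rewrite inE orbC => ->.
have vx : v != x by apply: contra xv; rewrite inE => /eqP->; rewrite eqxx.
have [S stS [vS xS aS]] := stable_avoiding2 nvx.
have far : x \notin ball E 2 v.
  apply/negP => /ball2P[xv'|[/sub.1[_ _]|[t [vtE txE]]]]; first by rewrite xv' eqxx in vx.
    exact/negP.
  have tc : t != c by apply: contraNneq cvE => tc; rewrite sub.2 -tc.
  have [[_ _ vt] [_ _ tx]] := (sub.1 _ vtE, sub.1 _ txE).
  by move: nvx; rewrite (adj_trans tc vt tx vx).
have := chi_rho_le_packing12 [set: T] (subgraph_packing1 sub stS) (packing2_pair sub.2 vx far).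
have -> : S :|: [set v; x] = v |: (x |: S).
  by apply/setP => y; rewrite !inE orbC orbA.
rewrite setTD; have := cardsC (v |: (x |: S)); rewrite !cardsU1 in_setU1 negb_or vx vS xS /=.
lia.
Qed.

Lemma min_degree_critical : chi_rho_critical e.
Proof.
move=> V E [sub proper]; rewrite chi_rho_diameter2 //.
suff : chi_rho V E <= #|T| - alpha e by have := alpha_le_card e; lia.
have [VT|] := eqVneq V [set: T]; last exact: chi_rho_vertex_deleted.
move: sub proper; rewrite {}VT => sub; rewrite eqxx => -[//|EE].
have /set0Pn[[u v]] : edges e :\: E != set0.
  apply: contra EE; rewrite setD_eq0 eqEsubset => ->; rewrite andbT.
  by apply/subsetP => p /sub.1[_ _]; rewrite inE.
rewrite !inE /= => /andP[uvE uv].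
have [uc|uc] := eqVneq u c.
  by apply: (chi_rho_centre_edge_deleted (v := v) sub); rewrite -uc // eq_sym (adj_neq eirr uv).
have [vc|vc] := eqVneq v c; last exact: chi_rho_edge_deleted uv uvE uc vc.
by apply: (chi_rho_centre_edge_deleted sub uc); rewrite -vc -sub.2.
Qed.

End MinDegree.

End Centre.

Theorem theorem5p1 (T : finType) (e : rel T) (esym : symmetric e)
    (eirr : irreflexive e) (hblock : block_graph e) (hdiam : diameter2 e) :
  chi_rho_critical e <-> (forall x : T, 2 <= deg e x).
Proof.
have [c [centre_adj adj_trans]] := block_diameter2_centre esym eirr hblock hdiam.
split; first exact: critical_min_degree esym hdiam centre_adj.
exact: min_degree_critical esym eirr hdiam adj_trans.
Qed.
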